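(* Let $\varphi\in\mathrm{THT}(\mathsf X,\mathsf U)$ and let $M=(T,T)$ be an equilibrium model of $\varphi$. Then $M$ is almost-empty, i.e. $T(i)\neq\emptyset$ for only finitely many $i$.
   Context: Fix a finite set $P$ of atomic propositions. THT formulas over $P$: $\varphi ::= p \mid \bot \mid \varphi\vee\varphi \mid \varphi\wedge\varphi \mid \varphi\rightarrow\varphi \mid \mathsf{X}\varphi \mid \varphi\,\mathsf{U}\,\varphi \mid \varphi\,\mathsf{R}\,\varphi$, with $\neg\varphi:=\varphi\rightarrow\bot$ and $\top:=\neg\bot$. A THT interpretation is a pair $M=(H,T)$ of infinite words over $2^P$ with $H(i)\subseteq T(i)$ for all $i$; it is total if $H=T$. Satisfaction $M,i\models\varphi$ is defined by: - $M,i\not\models\bot$; - $M,i\models p$ iff $p\in H(i)$; - $\vee$ and $\wedge$ are interpreted as usual; - $M,i\models\varphi\rightarrow\psi$ iff for both $H'\in\{H,T\}$, either $(H',T),i\not\models\varphi$ or $(H',T),i\models\psi$; - $M,i\models\mathsf X\varphi$ iff $M,i+1\models\varphi$; - $M,i\models\varphi\mathsf U\psi$ iff some $j\ge i$ has $M,j\models\psi$ and $M,k\models\varphi$ for all $i\le k<j$. $M\models\varphi$ means $M,0\models\varphi$. An equilibrium model of $\varphi$ is a total $(T,T)\models\varphi$ with $(H,T)\not\models\varphi$ whenever $H(i)\subseteq T(i)$ for all $i$ and $H\ne T$. $\mathrm{THT}(\mathsf X,\mathsf U)$ is the set of THT formulas whose only temporal modalities are $\mathsf X$ and $\mathsf U$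 (no bounds on nesting). A total interpretation is almost-empty if it has only finitely many positions $i$ with $T(i)\ne\emptyset$. *)

From Stdlib Require Import List.

Set Implicit Arguments.

Inductive formula (P : Type) : Type :=
| Atom : P -> formula P
| Bot : formula P
| Or : formula P -> formula P -> formula P
| And : formula P -> formula P -> formula P
| Impl : formula P -> formula P -> formula P
| Next : formula P -> formula P
| Until : formula P -> formula P -> formula P
| Release : formula P -> formula P -> formula P.

Arguments Bot {P}.

Definition Neg {P} (f : formula P) : formula P := Impl f Bot.
Definition Top {P} : formula P := Neg Bot.

(* Infinite words over 2^P: position i, set of atoms true there *)
Definition trace (P : Type) := nat -> P -> Prop.

Definition sub_trace {P} (H T : trace P) : Prop :=
  forall i (p : P), H i p -> T i p.

(* Satisfaction (H,T), i |= phi.  Requires H to be pointwise included in T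
   for it to be a THT interpretation, which is imposed where used. *)
Fixpoint sat {P} (H T : trace P) (i : nat) (f : formula P) : Prop :=
  match f with
  | Atom p => H i p
  | Bot => False
  | Or a b => sat H T i a \/ sat H T i b
  | And a b => sat H T i a /\ sat H T i b
  | Impl a b =>
      (~ sat H T i a \/ sat H T i b) /\ (~ sat T T i a \/ sat T T i b)
  | Next a => sat H T (S i) a
  | Until a b =>
      exists j, i <= j /\ sat H T j b /\ (forall k, i <= k -> k < j -> sat H T k a)
  | Release a b =>
      forall j, i <= j -> sat H T j b \/ (exists k, i <= k /\ k < j /\ sat H T k a)
  end.

Fixpoint in_XU {P} (f : formula P) : Prop :=
  match f with
  | Atom _ | Bot => True
  | Or a b | And a b | Impl a b | Until a b => in_XU a /\ in_XU b
  | Next a => in_XU a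
  | Release _ _ => False
  end.

(* Equilibrium model (T,T) of phi.  Since H(i) subset T(i), H <> T as words
   of sets means some atom is in T(i) but not H(i). *)
Definition equilibrium_model {P} (f : formula P) (T : trace P) : Prop :=
  sat T T 0 f /\
  forall H : trace P, sub_trace H T ->
    (exists i (p : P), T i p /\ ~ H i p) -> ~ sat H T 0 f.

Definition almost_empty {P} (T : trace P) : Prop :=
  exists n, forall i, n <= i -> forall p : P, ~ T i p.

Definition finite_atoms (P : Type) : Prop := exists l : list P, forall p, In p l.

(* Satisfaction of a THT(X,U) formula by (T,T) only depends on a finite prefix
   of the here-trace: X and U look a bounded distance ahead, and implications
   need nothing new on the here-side when their antecedent already fails in
   (T,T), because satisfaction persists from (H,T) to (T,T).  Hence (H,T) |= phi
   where H is T cut off after a large position n, and minimality of the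
   equilibrium model forces T to be empty from n on. *)

From Stdlib Require Import Arith Lia.

Lemma sat_persist {P} {H T : trace P} {f : formula P} :
  sub_trace H T -> forall i, sat H T i f -> sat T T i f.
Proof.
  intros HT; induction f; simpl; intros i Hs; auto.
  - destruct Hs; [left | right]; auto.
  - destruct Hs; split; auto.
  - destruct Hs; split; auto.
  - destruct Hs as [j [Hij [Hj Hk]]]; exists j; auto.
  - intros j Hj; destruct (Hs j Hj) as [? | [k [? [? ?]]]];
      [left; auto | right; exists k; auto].
Qed.

Definition truncate {P} (T : trace P) (n : nat) : trace P :=
  fun i p => i < n /\ T i p.

Lemma sub_trace_truncate {P} (T : trace P) n : sub_trace (truncate T n) T.
Proof. now intros i p [_ Hp]. Qed.

Definition eventually (Q : nat -> Prop) : Prop :=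
  exists N, forall n, N <= n -> Q n.

Lemma eventually_and (Q R : nat -> Prop) :
  eventually Q -> eventually R -> eventually (fun n => Q n /\ R n).
Proof.
  intros [N1 H1] [N2 H2]; exists (N1 + N2); intros n Hn; split;
    [apply H1 | apply H2]; lia.
Qed.

Lemma eventually_forall_lt (Q : nat -> nat -> Prop) (m : nat) :
  (forall k, k < m -> eventually (Q k)) ->
  eventually (fun n => forall k, k < m -> Q k n).
Proof.
  induction m as [| m IH]; intros HQ.
  - exists 0; intros; lia.
  - destruct (eventually_and _ _ (IH ltac:(auto)) (HQ m ltac:(lia)))
      as [N HN].
    exists N; intros n Hn k Hk.
    destruct (HN n Hn) as [Hlt Hm].
    destruct (Nat.eq_dec k m); [subst | apply Hlt; lia]; auto.
Qed.

Lemma sat_truncate_eventually {P} (T : trace P) (f : formula P) :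
  in_XU f -> forall i, sat T T i f -> eventually (fun n => sat (truncate T n) T i f).
Proof.
  induction f as [p | | a IHa b IHb | a IHa b IHb | a IHa b IHb | a IHa
                 | a IHa b IHb | a _ b _]; simpl; intros Hx i Hs.
  - exists (S i); intros n Hn; split; auto; lia.
  - contradiction.
  - destruct Hx as [Ha Hb]; destruct Hs as [Hs | Hs].
    + destruct (IHa Ha i Hs) as [N HN]; exists N; auto.
    + destruct (IHb Hb i Hs) as [N HN]; exists N; auto.
  - destruct Hx as [Ha Hb]; destruct Hs as [Hsa Hsb].
    exact (eventually_and _ _ (IHa Ha i Hsa) (IHb Hb i Hsb)).
  - destruct Hx as [_ Hb]; destruct Hs as [[Hna | Hsb] _].
    + exists 0; intros n _; split; auto.
      left; intro Hc; apply Hna; exact (sat_persist (sub_trace_truncate T n) i Hc).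
    + destruct (IHb Hb i Hsb) as [N HN]; exists N; intros n Hn; split; auto.
  - exact (IHa Hx (S i) Hs).
  - destruct Hx as [Ha Hb]; destruct Hs as [j [Hij [Hj Hk]]].
    assert (Hpre : eventually (fun n => forall k, k < j -> i <= k ->
                                  sat (truncate T n) T k a)).
    { apply eventually_forall_lt; intros k Hkj.
      destruct (le_lt_dec i k) as [Hik | Hki].
      - destruct (IHa Ha k (Hk k Hik Hkj)) as [N HN]; exists N; auto.
      - exists 0; intros; lia. }
    destruct (eventually_and _ _ (IHb Hb j Hj) Hpre) as [N HN].
    exists N; intros n Hn; destruct (HN n Hn) as [Hjn Hpren].
    exists j; repeat split; auto.
  - contradiction.
Qed.

Theorem mainTheorem13 (P : Type) (HP : finite_atoms P)
  (phi : formula P) (T : trace P) :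
  in_XU phi -> equilibrium_model phi T -> almost_empty T.
Proof.
  intros Hx [Hsat Hmin].
  destruct (sat_truncate_eventually T phi Hx 0 Hsat) as [N HN].
  exists N; intros i Hi p Hp.
  apply (Hmin (truncate T N) (sub_trace_truncate T N)).
  - exists i, p; split; auto; intros [? _]; lia.
  - apply HN; auto.
Qed.
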